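(* Let $N,R,k\in\mathbb{N}$. For every choice of bijections $g_1,\dots,g_R:[N]\to[N]$ there exists a $1$-layer transformer (with learned embeddings) with embedding dimension $d=\tilde O(R+k)$ and MLP width $\tilde O(R)$ that solves the $k$-hop factual recall problem with Chain-of-Thought: on every input $(s_0,r_1,\dots,r_k)\in[N]\times[R]^k$, generating autoregressively it produces tokens $s_1,\dots,s_k$ with $s_i=g_{r_i}(s_{i-1})$, so that its final output is $(g_{r_k}\circ\cdots\circ g_{r_1})(s_0)$.
   Context: Write $[N]=\{1,\dots,N\}$. Subjects are $[N]$, relations are $[R]$, each relation $r$ has a bijection $g_r:[N]\to[N]$. The transformer is over vocabulary $[N]\cup[R]$ with embeddings in $\mathbb{R}^d$; a layer applies (causal, softmax) self-attention $Z=\sum_h W_V^{(h)}X(A^{(h)})^\top$ with $A^{(h)}=\mathrm{softmax}((W_K^{(h)}X)^\top(W_Q^{(h)}X))$, a residual $\tilde X=Z+X$, and a column-wise ReLU MLP with residual $X'=\tilde X+\mathrm{MLP}(\tilde X)$. Chain-of-Thought means the model generates tokens autoregressively, each generated token (chosen by decoding the last position's output into the vocabulary) being appended to the sequence before the next forward pass. $\tilde O(\cdot)$ suppresses logarithmic factors. *)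

From HB Require Import structures.
From Stdlib Require Import Reals.
From mathcomp Require Import all_boot all_order all_algebra.
From mathcomp Require Import Rstruct.
Set Implicit Arguments. Unset Strict Implicit. Unset Printing Implicit Defensive.
Import Order.TTheory GRing.Theory Num.Theory.
Local Open Scope ring_scope.

Definition vocab (N Rn : nat) : finType := ('I_N + 'I_Rn)%type.

Record transformer (N Rn d m : nat) := Transformer {
  emb : vocab N Rn -> 'cV[R]_d;
  pos : nat -> 'cV[R]_d;
  nheads : nat;
  WQ : 'I_nheads -> 'M[R]_d;
  WK : 'I_nheads -> 'M[R]_d;
  WV : 'I_nheads -> 'M[R]_d;
  W1 : 'M[R]_(m, d);
  b1 : 'cV[R]_m;
  W2 : 'M[R]_(d, m);
  b2 : 'cV[R]_d;
  unemb : vocab N Rn -> 'rV[R]_d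
}.

Arguments WQ {N Rn d m} t _.
Arguments WK {N Rn d m} t _.
Arguments WV {N Rn d m} t _.

Section Forward.
Variables (N Rn d m : nat) (M : transformer N Rn d m).

Definition xcol (s : seq (vocab N Rn)) (i : nat) : 'cV[R]_d :=
  nth 0 (map (emb M) s) i + pos M i.

Definition score (s : seq (vocab N Rn)) (h : 'I_(nheads M)) (i j : nat) : R :=
  (((WK M h *m xcol s i)^T) *m (WQ M h *m xcol s j)) 0 0.

Definition attn_last (s : seq (vocab N Rn)) : 'cV[R]_d :=
  let j := (size s).-1 in
  \sum_(h < nheads M) \sum_(i < size s)
     (exp (score s h i j) / \sum_(i' < size s) exp (score s h i' j))
       *: (WV M h *m xcol s i).

Definition relu_col (n : nat) (v : 'cV[R]_n) : 'cV[R]_n :=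
  map_mx (fun t : R => Num.max t 0) v.

Definition out_last (s : seq (vocab N Rn)) : 'cV[R]_d :=
  let z := attn_last s + xcol s (size s).-1 in
  z + (W2 M *m relu_col (W1 M *m z + b1 M) + b2 M).

Definition logit (s : seq (vocab N Rn)) (v : vocab N Rn) : R :=
  (unemb M v *m out_last s) 0 0.

Definition decode (s : seq (vocab N Rn)) : option (vocab N Rn) :=
  [pick v | [forall w, (w != v) ==> (logit s w < logit s v)]].

Fixpoint generate (s : seq (vocab N Rn)) (n : nat) : option (seq (vocab N Rn)) :=
  match n with
  | 0 => Some [::]
  | n'.+1 =>
      match decode s with
      | Some v => omap (cons v) (generate (rcons s v) n')
      | None => None
      end
  end.

End Forward.

Definition hops (N Rn : nat) (g : 'I_Rn -> 'I_N -> 'I_N)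
  (s0 : 'I_N) (rs : seq 'I_Rn) : seq 'I_N :=
  scanl (fun s r => g r s) s0 rs.

Definition prompt (N Rn : nat) (s0 : 'I_N) (rs : seq 'I_Rn) : seq (vocab N Rn) :=
  (inl s0 : vocab N Rn) :: map (fun r => (inr r : vocab N Rn)) rs.

(* logarithmic factor used in the O~ bounds *)
Definition logfac (N Rn k : nat) : nat := trunc_log 2 (N + Rn + k + 2).

From Pilot Require Import Defs.
From HB Require Import structures.
From Stdlib Require Import Reals.
From mathcomp Require Import all_boot all_order all_algebra.
From mathcomp Require Import Rstruct.
From mathcomp Require Import ring lra zify.
Set Implicit Arguments. Unset Strict Implicit. Unset Printing Implicit Defensive.
Import Order.TTheory GRing.Theory Num.Theory.
Local Open Scope ring_scope.

(* Tokens live in a feature space with one-hot positions (2k slots), where a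
   relation token r is the indicator of r and a subject token u is the vector
   (g_r(u))_r of all its images.  To produce s_{p+1} at position k+p, head 0
   attends to position p+1 and copies the indicator of r_{p+1}, head 1 attends
   to the position holding s_p and copies (g_r(s_p))_r; with attention logits
   of size 16k(N+1) a copied value ranging over [0, V] is off by at most
   V/(8(N+1)).  MLP unit r computes ReLU(2(N+1)[r = r_{p+1}] + g_r(s_p)
   - 2(N+1)), so the sum y of the units is within 1/2 of g_{r_{p+1}}(s_p), and
   the logits 2uy - u^2 of the subjects (-1 for the relations) are uniquely
   maximal at that subject.  The dimension 2k + 4R + 2 and the width R do not
   depend on N. *)

Lemma exp_gt0 (x : R) : 0 < exp x.
Proof. exact/RltP/exp_pos. Qed.

Lemma lt_exp (x : R) : x < exp x.
Proof. by apply: (@lt_le_trans _ _ (1 + x)); [lra | exact/RleP/exp_ineq1_le]. Qed.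

Lemma exp_le1 (x : R) : x <= 0 -> exp x <= 1.
Proof.
have <- : exp 0 = 1 := exp_0.
rewrite le_eqVlt => /predU1P[->//|/RltP x_lt0].
exact/ltW/RltP/exp_increasing.
Qed.

Lemma softmax_peak_err n (sc v : 'I_n -> R) (t : 'I_n) (L V : R) :
  sc t = L -> (forall i, i != t -> sc i <= 0) -> (forall i, 0 <= v i <= V) ->
  `|\sum_i (exp (sc i) / \sum_j exp (sc j)) * v i - v t| * L <= V * n%:R.
Proof.
move=> sc_t sc_le0 v_bd; set D := \sum_j exp (sc j).
have D_ge : exp L <= D.
  rewrite /D (bigD1 t) //= sc_t lerDl sumr_ge0 // => i _; exact/ltW/exp_gt0.
have D_gt0 : 0 < D := lt_le_trans (exp_gt0 L) D_ge.
have -> : \sum_i exp (sc i) / D * v i - v t = \sum_i exp (sc i) / D * (v i - v t).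
  rewrite (eq_bigr _ (fun i _ => mulrBr _ _ _)) sumrB -mulr_suml.
  by rewrite -[\sum_i _ / D]mulr_suml divff ?gt_eqF // mul1r.
have term_le i : `|exp (sc i) / D * (v i - v t)| * D <= V.
  have e_ge0 := ltW (exp_gt0 (sc i)).
  rewrite normrM mulrAC ger0_norm ?divr_ge0 ?(ltW D_gt0) // divfK ?gt_eqF //.
  have [/andP[v0 vV] /andP[vt0 vtV]] := (v_bd i, v_bd t).
  have [->|it] := eqVneq i t; first by rewrite subrr normr0 mulr0; lra.
  have e_le1 := exp_le1 (sc_le0 i it).
  have : `|v i - v t| <= V by rewrite ler_norml; apply/andP; split; lra.
  have := normr_ge0 (v i - v t); nra.
apply: le_trans (_ : `|_| * D <= _).
  exact/ler_wpM2l/(le_trans (ltW (lt_exp L))).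
apply: le_trans (ler_wpM2r (ltW D_gt0) (ler_norm_sum _ _ _)) _.
have -> : V * n%:R = \sum_(i < n) V by rewrite sumr_const card_ord mulr_natr.
by rewrite mulr_suml; exact: ler_sum.
Qed.

Lemma relu_gate_open (a rho sig v : R) : 1 <= a -> 0 <= v ->
  `|rho - 1| * a * 8 <= 1 -> `|sig - v| * a * 8 <= a - 1 ->
  `|Num.max (2 * a * rho + sig - 2 * a) 0 - v| < 1 / 2.
Proof.
move=> a_ge1 v_ge0 rho_err sig_err.
have relu_err : `|Num.max (2 * a * rho + sig - 2 * a) 0 - v| <= `|2 * a * rho + sig - 2 * a - v|.
  case: (lerP 0 (2 * a * rho + sig - 2 * a)) => // x_lt0.
  rewrite sub0r normrN ger0_norm // ler_normr; apply/orP; right; lra.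
apply: le_lt_trans relu_err _.
have -> : 2 * a * rho + sig - 2 * a - v = 2 * a * (rho - 1) + (sig - v) by ring.
apply: le_lt_trans (ler_normD _ _) _.
rewrite normrM (ger0_norm (_ : 0 <= 2 * a)); last lra.
have := normr_ge0 (sig - v); have := normr_ge0 (rho - 1); nra.
Qed.

Lemma relu_gate_closed (a rho sig v : R) : 1 <= a -> v <= a - 1 ->
  `|rho| * a * 8 <= 1 -> `|sig - v| * a * 8 <= a - 1 ->
  Num.max (2 * a * rho + sig - 2 * a) 0 = 0.
Proof.
move=> a_ge1 v_le rho_err sig_err; rewrite max_r //.
have := ler_norm rho; have := ler_norm (sig - v); have := normr_ge0 (sig - v).
nra.
Qed.

Lemma nearest_logit_lt (u v : nat) (y : R) : u != v -> `|y - v%:R| < 1 / 2 ->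
  2 * u%:R * y - u%:R ^+ 2 < 2 * v%:R * y - v%:R ^+ 2.
Proof.
move=> uv; rewrite ltr_norml => /andP[y_gt y_lt].
have [u_lt|v_lt|u_eq] := ltngtP u v; last by rewrite u_eq eqxx in uv.
- have : u%:R + 1 <= v%:R :> R by rewrite natr1 ler_nat.
  nra.
- have : v%:R + 1 <= u%:R :> R by rewrite natr1 ler_nat.
  nra.
Qed.

Lemma nearest_logit_gt (v : nat) (y : R) : `|y - v%:R| < 1 / 2 ->
  -1 < 2 * v%:R * y - v%:R ^+ 2.
Proof. rewrite ltr_norml => /andP[y_gt y_lt]; nra. Qed.

Lemma decode_argmax N Rn d m (M : transformer N Rn d m) s v :
  (forall w, w != v -> logit M s w < logit M s v) -> decode M s = Some v.
Proof.
move=> v_max; rewrite /decode; case: pickP => [w /forallP w_max | none].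
  apply: congr1; apply/eqP/negPn/negP => w_neq.
  have := w_max v; rewrite eq_sym w_neq /= => lt_vw.
  by have := lt_trans lt_vw (v_max w w_neq); rewrite ltxx.
have /forallP[] := negbT (none v).
by move=> w; apply/implyP/v_max.
Qed.

Lemma generate_decode N Rn d m (M : transformer N Rn d m) s v n :
  decode M s = Some v ->
  generate M s n.+1 = omap (cons v) (generate M (rcons s v) n).
Proof. by move=> /= ->. Qed.

Section FeatureVectors.
Variable T : finType.

Definition fvec (f : T -> R) : 'cV[R]_#|T| := \col_a f (enum_val a).

Definition fcols n (F : 'I_n -> T -> R) : 'M[R]_(n, #|T|) :=
  \matrix_(i, a) F i (enum_val a).

Definition frows n (F : T -> 'I_n -> R) : 'M[R]_(#|T|, n) :=
  \matrix_(a, i) F (enum_val a) i.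

Definition sel_mx (sel : T -> option T) : 'M[R]_#|T| :=
  \matrix_(a, b) if sel (enum_val a) is Some u then (enum_val b == u)%:R else 0.

Lemma fvecE f t : fvec f (enum_rank t) 0 = f t.
Proof. by rewrite mxE enum_rankK. Qed.

Lemma sum_enum_rank (h : 'I_#|T| -> R) : \sum_a h a = \sum_t h (enum_rank t).
Proof.
rewrite (reindex (@enum_rank T)) //.
by exists (@enum_val T (mem T)) => x _; [exact: enum_rankK | exact: enum_valK].
Qed.

Lemma fvecD f h : fvec f + fvec h = fvec (fun t => f t + h t).
Proof. by apply/matrixP => a j; rewrite !mxE. Qed.

Lemma fvecZ c f : c *: fvec f = fvec (fun t => c * f t).
Proof. by apply/matrixP => a j; rewrite !mxE. Qed.

Lemma fvec_dot f h : ((fvec f)^T *m fvec h) 0 0 = \sum_t f t * h t.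
Proof. by rewrite !mxE sum_enum_rank; apply: eq_bigr => t _; rewrite !mxE enum_rankK. Qed.

Lemma fcols_mul n (F : 'I_n -> T -> R) (x : 'cV[R]_#|T|) i :
  (fcols F *m x) i 0 = \sum_t F i t * x (enum_rank t) 0.
Proof. by rewrite mxE sum_enum_rank; apply: eq_bigr => t _; rewrite mxE enum_rankK. Qed.

Lemma frows_mul n (F : T -> 'I_n -> R) (x : 'cV[R]_n) :
  frows F *m x = fvec (fun t => \sum_i F t i * x i 0).
Proof.
by apply/matrixP => a j; rewrite (ord1 j) !mxE; apply: eq_bigr => i _; rewrite mxE.
Qed.

Lemma sel_mx_mul sel f :
  sel_mx sel *m fvec f = fvec (fun t => if sel t is Some u then f u else 0).
Proof.
apply/matrixP => a j; rewrite !mxE sum_enum_rank.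
under eq_bigr do rewrite !mxE !enum_rankK.
case: (sel _) => [u|]; last by rewrite big1 // => t _; rewrite mul0r.
by rewrite (bigD1 u) //= eqxx mul1r big1 ?addr0 // => t /negbTE ->; rewrite mul0r.
Qed.

End FeatureVectors.

Lemma nth_hops N Rn (g : 'I_Rn -> 'I_N -> 'I_N) s0 rs r0 p : (p < size rs)%N ->
  nth s0 (hops g s0 rs) p = g (nth r0 rs p) (nth s0 (s0 :: hops g s0 rs) p).
Proof.
move=> p_lt; rewrite nth_scanl // (nth_cons_scanl s0 _ (ltnW p_lt)).
by rewrite (take_nth r0) // foldl_rcons.
Qed.

Section HopModel.
Variables (N Rn k : nat) (g : 'I_Rn -> 'I_N -> 'I_N).

(* Coordinates: positions, then per relation r: [f_rel r] (token r),
   [f_val r] (g_r of a subject token), [f_gate r] and [f_arg r] (what heads 0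
   and 1 copy them to), and finally [f_out true] (the answer y) and
   [f_out false] (the constant 1). *)
Definition feature : finType :=
  ('I_(k + k) + ('I_Rn + ('I_Rn + ('I_Rn + ('I_Rn + bool)))))%type.

Definition f_rel r : feature := inr (inl r).
Definition f_val r : feature := inr (inr (inl r)).
Definition f_gate r : feature := inr (inr (inr (inl r))).
Definition f_arg r : feature := inr (inr (inr (inr (inl r)))).
Definition f_out b : feature := inr (inr (inr (inr (inr b)))).

Definition tok_feat (v : vocab N Rn) (t : feature) : R :=
  match v, t with
  | inr r, inr (inl r') => (r == r')%:R
  | inl u, inr (inr (inl r)) => (g r u : nat)%:R
  | _, _ => 0
  end.

Definition pos_feat (i : nat) (t : feature) : R := if t is inl q then (i == q)%:R else 0.

(* The position head h reads from query position q = k + p: head 0 reads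
   r_{p+1} at p+1, head 1 reads s_p, i.e. s_0 at 0 or the query itself. *)
Definition key_pos (h q : nat) : nat :=
  if h == 0%N then (q - k).+1 else if q == k then 0%N else q.

Definition key_sel (h : nat) (t : feature) : option feature :=
  if t is inl q then omap (fun q' : 'I_(k + k) => inl q' : feature) (insub (key_pos h q))
  else None.

Definition val_sel (h : nat) (t : feature) : option feature :=
  match t with
  | inr (inr (inr (inl r))) => if h == 0%N then Some (f_rel r) else None
  | inr (inr (inr (inr (inl r)))) => if h == 0%N then None else Some (f_val r)
  | _ => None
  end.

Definition att_scale : R := (8 * N.+1 * (k + k))%:R.
Definition gate_bias : R := (2 * N.+1)%:R.

Definition unemb_feat (v : vocab N Rn) (t : feature) : R :=
  if v is inl u then
    if t == f_out true then 2 * (u : nat)%:R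
    else if t == f_out false then - (u : nat)%:R ^+ 2 else 0
  else if t == f_out false then -1 else 0.

Definition W1_hop : 'M[R]_(Rn, #|feature|) :=
  fcols (fun r t => if t == f_gate r then gate_bias else (t == f_arg r)%:R).

Definition hop_model : transformer N Rn #|feature| Rn :=
  @Transformer N Rn #|feature| Rn
    (fun v => fvec (tok_feat v)) (fun i => fvec (pos_feat i)) 2
    (fun _ => att_scale%:M) (fun h => sel_mx (key_sel h)) (fun h => sel_mx (val_sel h))
    W1_hop
    (const_mx (- gate_bias))
    (frows (fun t _ => (t == f_out true)%:R))
    (fvec (fun t => (t == f_out false)%:R))
    (fun v => fcols (fun _ => unemb_feat v)).

Lemma card_feature : #|feature| = (k + k + 4 * Rn + 2)%N.
Proof. rewrite !card_sum !card_ord card_bool; lia. Qed.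

Lemma tok_feat_pos v q : tok_feat v (inl q) = 0.
Proof. by case: v. Qed.

Lemma xcol_hop s (x0 : vocab N Rn) i : (i < size s)%N ->
  Defs.xcol hop_model s i = fvec (fun t => tok_feat (nth x0 s i) t + pos_feat i t).
Proof. by move=> i_lt; rewrite /Defs.xcol (nth_map x0) // fvecD. Qed.

Lemma score_hop s (x0 : vocab N Rn) (h : 'I_2) i j : (i < size s)%N -> (j < size s)%N ->
  (k <= j < k + k)%N ->
  score (M := hop_model) s h i j = if i == key_pos h j then att_scale else 0.
Proof.
move=> i_lt j_lt /andP[k_le j_lt2].
rewrite /score /= (xcol_hop x0 i_lt) (xcol_hop x0 j_lt) sel_mx_mul.
rewrite mul_scalar_mx fvecZ fvec_dot.
have key_lt : (key_pos h j < k + k)%N.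
  by rewrite /key_pos; case: (h == 0 :> nat); [|case: (j == k)]; lia.
rewrite (bigD1 (inl (Ordinal j_lt2) : feature)) //= big1 ?addr0.
  by rewrite insubT /= !tok_feat_pos eqxx /=; case: eqP => _ /=; ring.
move=> [q|t] t_neq /=; last by rewrite mul0r.
have /negbTE j_neq : j != q.
  by apply: contraNneq t_neq => j_eq; apply/eqP; congr inl; exact/val_inj/esym.
by rewrite tok_feat_pos add0r j_neq !mulr0.
Qed.

Definition attn_w s (h : 'I_2) (i : nat) : R :=
  exp (score (M := hop_model) s h i (size s).-1) /
  \sum_(i' < size s) exp (score (M := hop_model) s h i' (size s).-1).

Lemma attn_hop s (x0 : vocab N Rn) t :
  attn_last hop_model s (enum_rank t) 0 =
  \sum_(h < 2) \sum_(i < size s) attn_w s h i *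
    (if val_sel h t is Some u then tok_feat (nth x0 s i) u + pos_feat i u else 0).
Proof.
rewrite /attn_last /= summxE; apply: eq_bigr => h _; rewrite summxE.
apply: eq_bigr => i _.
by rewrite mxE (xcol_hop x0 (ltn_ord i)) sel_mx_mul fvecE.
Qed.

Lemma attn_gate s (x0 : vocab N Rn) r :
  attn_last hop_model s (enum_rank (f_gate r)) 0 =
  \sum_(i < size s) attn_w s 0 i * tok_feat (nth x0 s i) (f_rel r).
Proof.
rewrite (attn_hop _ x0) big_ord_recl big_ord1 /= [X in _ + X]big1 => [|i _].
  by rewrite addr0; under eq_bigr do rewrite addr0.
by rewrite mulr0.
Qed.

Lemma attn_arg s (x0 : vocab N Rn) r :
  attn_last hop_model s (enum_rank (f_arg r)) 0 =
  \sum_(i < size s) attn_w s 1 i * tok_feat (nth x0 s i) (f_val r).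
Proof.
rewrite (attn_hop _ x0) big_ord_recl big_ord1 /= [X in X + _]big1 => [|i _].
  by rewrite add0r; under eq_bigr do rewrite addr0.
by rewrite mulr0.
Qed.

Lemma attn_out s b : attn_last hop_model s (enum_rank (f_out b)) 0 = 0.
Proof.
case: s => [|x0 s'].
  by rewrite /attn_last summxE big1 // => h _; rewrite summxE big_ord0.
by rewrite (attn_hop _ x0) big1 // => h _; rewrite big1 // => i _; rewrite mulr0.
Qed.

Lemma W1_hop_mul (x : 'cV[R]_#|feature|) r :
  (W1_hop *m x) r 0 = gate_bias * x (enum_rank (f_gate r)) 0 + x (enum_rank (f_arg r)) 0.
Proof.
rewrite fcols_mul (bigD1 (f_gate r)) //= (bigD1 (f_arg r)) //= big1 => [|t /andP[t_gate t_arg]].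
  by rewrite eqxx /= eqxx mul1r addr0.
by rewrite (negbTE t_gate) (negbTE t_arg) mul0r.
Qed.

Lemma out_hop s b : (0 < size s)%N ->
  out_last hop_model s (enum_rank (f_out b)) 0 =
  if b then \sum_r Num.max (gate_bias * attn_last hop_model s (enum_rank (f_gate r)) 0
                            + attn_last hop_model s (enum_rank (f_arg r)) 0 - gate_bias) 0
  else 1.
Proof.
case: s => [//|x0 s'] _; set s := x0 :: s'.
set z := attn_last hop_model s + Defs.xcol hop_model s (size s).-1.
have z_hidden t : (if t is inr (inr (inr _)) then true else false) ->
    z (enum_rank t) 0 = attn_last hop_model s (enum_rank t) 0.
  rewrite mxE (xcol_hop x0 (leqnn (size s))) fvecE.
  by move: t => [q|[r|[r|t]]] // _; case: (nth _ _ _) => ? /=; rewrite !addr0.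
rewrite /out_last /= -/z frows_mul fvecD mxE fvecE z_hidden // attn_out add0r.
case: b => /=; last by rewrite big1 ?add0r // => r _; rewrite mul0r.
rewrite addr0; apply: eq_bigr => r _.
rewrite mul1r /relu_col mxE [(W1_hop *m z + _) r 0]mxE W1_hop_mul.
by rewrite [const_mx _ r 0]mxE !z_hidden.
Qed.

Lemma logit_hop s v : (0 < size s)%N ->
  logit hop_model s v =
  if v is inl u then
    2 * (u : nat)%:R * out_last hop_model s (enum_rank (f_out true)) 0 - (u : nat)%:R ^+ 2
  else -1.
Proof.
move=> s_gt0; rewrite /logit fcols_mul (bigD1 (f_out true)) //= (bigD1 (f_out false)) //=.
rewrite big1 => [|t /andP[t_ans t_one]]; last first.
  by rewrite /unemb_feat (negbTE t_ans) (negbTE t_one); case: v; rewrite mul0r.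
by rewrite (out_hop false s_gt0) /unemb_feat /=; case: v => * /=; ring.
Qed.

Lemma decode_hop s (c : 'I_N) : (0 < size s)%N ->
  `|out_last hop_model s (enum_rank (f_out true)) 0 - (c : nat)%:R| < 1 / 2 ->
  decode hop_model s = Some (inl c).
Proof.
move=> s_gt0 y_near; apply: decode_argmax => w w_neq; rewrite !logit_hop //.
case: w w_neq => [u|r] w_neq; last exact: nearest_logit_gt.
by apply: nearest_logit_lt y_near; apply: contraNneq w_neq => /val_inj ->.
Qed.

Lemma attn_head_err s (x0 : vocab N Rn) (h : 'I_2) p (f : feature) (V : R) :
  (p < k)%N -> size s = (k + p).+1 -> (forall v, 0 <= tok_feat v f <= V) ->
  `|\sum_(i < size s) attn_w s h i * tok_feat (nth x0 s i) f
      - tok_feat (nth x0 s (key_pos h (k + p))) f| * (N.+1)%:R * 8 <= V.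
Proof.
move=> p_lt s_size f_bd.
have last_eq : (size s).-1 = (k + p)%N by rewrite s_size.
have key_lt : (key_pos h (k + p) < size s)%N.
  by rewrite s_size /key_pos; case: (h == 0 :> nat); [|case: (_ == _)]; lia.
have score_eq (i : 'I_(size s)) : score (M := hop_model) s h i (size s).-1 =
    if i == Ordinal key_lt then att_scale else 0.
  by rewrite last_eq (score_hop x0) ?s_size //; lia.
have score_le0 (i : 'I_(size s)) :
    i != Ordinal key_lt -> score (M := hop_model) s h i (size s).-1 <= 0.
  by move=> /negbTE i_neq; rewrite score_eq i_neq.
have := @softmax_peak_err _ (fun i => score (M := hop_model) s h i (size s).-1)
  (fun i => tok_feat (nth x0 s i) f) (Ordinal key_lt) att_scale V.
move=> /(_ _ score_le0 (fun i => f_bd _)); rewrite score_eq eqxx => /(_ erefl).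
have V_ge0 : 0 <= V by case/andP: (f_bd x0) => ? ?; lra.
have kk_gt0 : 0 < (k + k)%:R :> R by rewrite ltr0n; lia.
have size_le : (size s)%:R <= (k + k)%:R :> R by rewrite ler_nat s_size; lia.
rewrite /att_scale !natrM => err_le.
rewrite -(ler_pM2r kk_gt0); apply: le_trans (ler_wpM2l V_ge0 size_le); lra.
Qed.

Lemma decode_hop_step s (x0 : vocab N Rn) p r c : (p < k)%N -> size s = (k + p).+1 ->
  nth x0 s p.+1 = inr r -> nth x0 s (key_pos 1 (k + p)) = inl c ->
  decode hop_model s = Some (inl (g r c)).
Proof.
move=> p_lt s_size s_rel s_subj.
apply: decode_hop; first by rewrite s_size.
rewrite (out_hop true) ?s_size //.
set a : R := (N.+1)%:R.
have a_ge1 : 1 <= a by rewrite ler1n.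
have bias_eq : gate_bias = 2 * a by rewrite /gate_bias natrM.
have N_eq : N%:R = a - 1 :> R by rewrite /a -natr1 addrK.
have gate_err r' :
    `|attn_last hop_model s (enum_rank (f_gate r')) 0 - (r == r')%:R| * a * 8 <= 1.
  have := attn_head_err x0 0 (f := f_rel r') p_lt s_size.
  rewrite -(attn_gate _ x0) /key_pos /= (_ : (k + p - k).+1 = p.+1) ?s_rel; last lia.
  by apply=> -[u|r''] /=; rewrite ?lexx ?ler01 //; case: eqP; rewrite ?lexx ?ler01.
have arg_err r' :
    `|attn_last hop_model s (enum_rank (f_arg r')) 0 - (g r' c : nat)%:R| * a * 8 <= a - 1.
  have := attn_head_err x0 1 (f := f_val r') p_lt s_size.
  rewrite -(attn_arg _ x0) s_subj -N_eq.
  by apply=> -[u|r''] /=; rewrite ?lexx ?ler0n // ler_nat ltnW.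
rewrite bias_eq (bigD1 r) //= big1 ?addr0 => [|r' r'_neq].
  by apply: relu_gate_open => //; have := gate_err r; rewrite eqxx.
apply: (@relu_gate_closed _ _ _ (g r' c : nat)%:R) => //.
- by rewrite -N_eq ler_nat ltnW.
- by have := gate_err r'; rewrite eq_sym (negbTE r'_neq) subr0.
Qed.

Lemma generate_hop s0 rs n p : size rs = k -> (p + n)%N = k ->
  generate hop_model
    (prompt s0 rs ++ map (fun s => inl s : vocab N Rn) (take p (hops g s0 rs))) n
  = Some (map (fun s => inl s : vocab N Rn) (drop p (hops g s0 rs))).
Proof.
move=> rs_size; set H := hops g s0 rs.
have H_size : size H = k by rewrite size_scanl.
elim: n p => [|n IHn] p pn_k.
  by rewrite addn0 in pn_k; rewrite pn_k drop_oversize ?H_size.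
have p_lt : (p < k)%N by lia.
have r0 : 'I_Rn by case: (rs) rs_size p_lt => [<- //|r0 _ _ _]; exact: r0.
set S := prompt s0 rs ++ _.
have S_size : size S = (k + p).+1.
  by rewrite size_cat /= !size_map size_take H_size p_lt rs_size; lia.
have S_rel : nth (inl s0) S p.+1 = inr (nth r0 rs p).
  by rewrite nth_cat /= size_map rs_size ltnS p_lt (nth_map r0) ?rs_size.
have S_subj : nth (inl s0) S (key_pos 1 (k + p)) = inl (nth s0 (s0 :: H) p).
  rewrite /key_pos /=; case: eqP => [kp_k|kp_neq]; first by have -> : p = 0%N by lia.
  have p_gt0 : (0 < p)%N by lia.
  have -> : nth s0 (s0 :: H) p = nth s0 H p.-1 by case: (p) p_gt0.
  rewrite nth_cat /= size_map rs_size (_ : (k + p < k.+1)%N = false); last lia.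
  rewrite (_ : (k + p - k.+1 = p.-1)%N); last lia.
  by rewrite (nth_map s0) ?nth_take ?size_take ?H_size ?p_lt //; lia.
rewrite (generate_decode _ (decode_hop_step p_lt S_size S_rel S_subj)) -nth_hops ?rs_size //.
have -> : rcons S (inl (nth s0 H p)) =
    prompt s0 rs ++ map (fun s => inl s : vocab N Rn) (take p.+1 H).
  by rewrite /S (take_nth s0) ?H_size // map_rcons rcons_cat.
by rewrite IHn ?addSnnS // [drop p H](drop_nth s0) ?H_size.
Qed.

Lemma generate_hop_prompt s0 rs : size rs = k ->
  generate hop_model (prompt s0 rs) k
  = Some (map (fun s => inl s : vocab N Rn) (hops g s0 rs)).
Proof.
by move=> rs_size; have := generate_hop s0 rs_size (add0n k); rewrite take0 cats0 drop0.
Qed.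

End HopModel.

Definition zero_transformer N Rn : transformer N Rn 0 0 :=
  @Transformer N Rn 0 0 (fun _ => 0) (fun _ => 0) 0 (fun _ => 0) (fun _ => 0) (fun _ => 0)
    0 0 0 0 (fun _ => 0).

Close Scope ring_scope.

Theorem theorem4 :
  exists (C c : nat), forall (N Rn k : nat) (g : 'I_Rn -> 'I_N -> 'I_N),
    (forall r, bijective (g r)) ->
    exists (d m : nat) (M : transformer N Rn d m),
      [/\ (d <= C * (Rn + k) * logfac N Rn k ^ c)%N,
          (m <= C * Rn * logfac N Rn k ^ c)%N &
          forall (s0 : 'I_N) (rs : k.-tuple 'I_Rn),
            generate M (prompt s0 rs) k =
            Some (map (fun s => (inl s : vocab N Rn)) (hops g s0 rs))].
Proof.
(* The g r need not be bijective.  The bound #|feature| <= 4(Rn + k) needs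
   k > 0; for k = 0 nothing is generated and any model will do. *)
exists 4, 0 => N Rn k g _.
have [->|k_gt0] := posnP k.
  exists 0, 0, (zero_transformer N Rn); split=> // s0 rs.
  by rewrite tuple0.
exists #|feature Rn k|, Rn, (hop_model k g); split.
- by rewrite card_feature expn0 muln1; lia.
- by rewrite expn0 muln1; lia.
- by move=> s0 rs; apply: generate_hop_prompt; rewrite size_tuple.
Qed.
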